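(* Let $\Sigma$ be a real symmetric positive definite $n\times n$ matrix, and let \[{\operatorname{mr}}_+(\Sigma)=\min\{\operatorname{rank}(\hat\Sigma)\mid \Sigma=\tilde\Sigma+\hat\Sigma,\ \tilde\Sigma\ge 0,\ \hat\Sigma\ge 0,\ \tilde\Sigma\text{ diagonal}\}.\] Then \[{\operatorname{mr}}_+(\Sigma)\ge\min\{\operatorname{trace}(\Sigma^{-1}(\Sigma-D))\mid D\text{ real diagonal},\ \Sigma\ge D\ge 0\}.\]
   Context: $M\ge 0$ means $M$ is positive semidefinite and $A\ge B$ means $A-B\ge0$; all matrices are real symmetric $n\times n$. *)

From HB Require Import structures.
From mathcomp Require Import all_boot all_order all_algebra.
From mathcomp Require Import reals.
Set Implicit Arguments. Unset Strict Implicit. Unset Printing Implicit Defensive.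
Import Order.TTheory GRing.Theory Num.Theory.
Local Open Scope ring_scope.

Definition psd (R : realType) (n : nat) (M : 'M[R]_n) : Prop :=
  M^T = M /\ forall x : 'cV[R]_n, 0 <= (x^T *m M *m x) 0 0.

Definition posdef (R : realType) (n : nat) (M : 'M[R]_n) : Prop :=
  M^T = M /\ forall x : 'cV[R]_n, x != 0 -> 0 < (x^T *m M *m x) 0 0.

Definition psd_le (R : realType) (n : nat) (B A : 'M[R]_n) : Prop :=
  psd (A - B).

From HB Require Import structures.
From mathcomp Require Import all_boot all_order all_algebra.
From mathcomp Require Import reals.
From mathcomp Require Import ring lra.
Set Implicit Arguments. Unset Strict Implicit. Unset Printing Implicit Defensive.
Import Order.TTheory GRing.Theory Num.Theory.
Local Open Scope ring_scope.

(* Take D := St, so that Sigma - D = Sh; it suffices to show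
   tr (Sigma^-1 A) <= rank A whenever 0 <= A <= Sigma, by induction on rank A.
   If A != 0 it has a diagonal entry a = A i i > 0, and with u := A e_i the
   Schur complement A' := A - a^-1 u u^T is again >= 0, has smaller rank, and
   satisfies A' <= Sigma.  For the rank-one part c u u^T <= Sigma, testing the
   form of Sigma - c u u^T at Sigma^-1 u gives m - c m^2 >= 0 with
   m = u^T Sigma^-1 u >= 0, whence tr (Sigma^-1 c u u^T) = c m <= 1. *)

Section BilinearForm.
Variables (R : comNzRingType) (n : nat).
Implicit Types (A B : 'M[R]_n) (x y z u : 'cV[R]_n).

Definition bform A x y : R := (x^T *m A *m y) 0 0.

Lemma bformDl A x y z : bform A (x + y) z = bform A x z + bform A y z.
Proof. by rewrite /bform linearD /= !mulmxDl mxE. Qed.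

Lemma bformDr A x y z : bform A z (x + y) = bform A z x + bform A z y.
Proof. by rewrite /bform !mulmxDr mxE. Qed.

Lemma bformZl A c x y : bform A (c *: x) y = c * bform A x y.
Proof. by rewrite /bform linearZ /= -!scalemxAl mxE. Qed.

Lemma bformZr A c x y : bform A x (c *: y) = c * bform A x y.
Proof. by rewrite /bform -!scalemxAr mxE. Qed.

Lemma bformNl A x y : bform A (- x) y = - bform A x y.
Proof. by rewrite -scaleN1r bformZl mulN1r. Qed.

Lemma bformNr A x y : bform A x (- y) = - bform A x y.
Proof. by rewrite -scaleN1r bformZr mulN1r. Qed.

Lemma bformD A B x y : bform (A + B) x y = bform A x y + bform B x y.
Proof. by rewrite /bform mulmxDr mulmxDl mxE. Qed.

Lemma bformB A B x y : bform (A - B) x y = bform A x y - bform B x y.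
Proof. by rewrite /bform mulmxBr mulmxBl !mxE. Qed.

Lemma bformZ A c x y : bform (c *: A) x y = c * bform A x y.
Proof. by rewrite /bform -scalemxAr -scalemxAl mxE. Qed.

Lemma dotmxC x y : (x^T *m y) 0 0 = (y^T *m x) 0 0.
Proof. by rewrite -(trmxK (y^T *m x)) trmx_mul trmxK [RHS]mxE. Qed.

Lemma bformC A x y : A^T = A -> bform A x y = bform A y x.
Proof. by move=> symA; rewrite /bform -mulmxA dotmxC trmx_mul symA. Qed.

Lemma bform_outer u x y : bform (u *m u^T) x y = (x^T *m u) 0 0 * (u^T *m y) 0 0.
Proof. by rewrite /bform !mulmxA -(mulmxA _ u^T) [in LHS]mxE big_ord1. Qed.

Lemma bform_delta A (i j : 'I_n) : bform A (delta_mx i 0) (delta_mx j 0) = A i j.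
Proof. by rewrite /bform trmx_delta -rowE -colE !mxE. Qed.

End BilinearForm.

Section PositiveSemidefinite.
Variables (R : realType) (n : nat).
Implicit Types (A B S : 'M[R]_n) (u x : 'cV[R]_n).

Lemma psdD A B : psd A -> psd B -> psd (A + B).
Proof.
move=> [symA posA] [symB posB]; split; first by rewrite linearD /= symA symB.
by move=> x; rewrite -/(bform _ x x) bformD addr_ge0 ?posA ?posB.
Qed.

Lemma psd_outer c u : 0 <= c -> psd (c *: (u *m u^T)).
Proof.
move=> c_ge0; split; first by rewrite linearZ /= trmx_mul trmxK.
move=> x; rewrite -/(bform _ x x) bformZ bform_outer dotmxC.
by rewrite mulr_ge0 // -expr2 sqr_ge0.
Qed.

Lemma posdef_psd S : posdef S -> psd S.
Proof.
move=> [symS posS]; split=> // x; have [->|x_neq0] := eqVneq x 0.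
  by rewrite mulmx0 mxE.
exact/ltW/posS.
Qed.

Lemma posdef_unitmx S : posdef S -> S \in unitmx.
Proof.
move=> [_ posS]; rewrite unitmxE unitfE; apply/negP => /det0P [v v_neq0 vS].
have vT_neq0 : v^T != 0 by rewrite -(inj_eq trmx_inj) trmxK trmx0.
by have := posS _ vT_neq0; rewrite trmxK vS mul0mx mxE ltxx.
Qed.

Lemma psd_diag_eq0 A : psd A -> (forall i, A i i = 0) -> A = 0.
Proof.
move=> [symA posA] diagA0; apply/matrixP => i j; rewrite mxE.
have Aji : A j i = A i j by rewrite -[in LHS]symA mxE.
(* The form at -A_ij e_i + e_j equals -2 A_ij^2. *)
have := posA ((- A i j) *: delta_mx i 0 + delta_mx j 0).
rewrite -/(bform _ _ _) bformDl !bformDr !bformZl !bformZr !bform_delta !diagA0 Aji.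
move=> form_ge0; have sqr_le0 : A i j ^+ 2 <= 0 by nra.
by apply/eqP; rewrite -sqrf_eq0 eq_le sqr_le0 sqr_ge0.
Qed.

Lemma trace_invmx_outer_le1 S c u : posdef S -> 0 <= c ->
  psd (S - c *: (u *m u^T)) -> \tr (invmx S *m (c *: (u *m u^T))) <= 1.
Proof.
move=> pdS c_ge0 [_ posSc]; have [_ posS] := posdef_psd pdS.
set z := invmx S *m u.
have Sz : S *m z = u by rewrite /z mulmxA mulmxV ?mul1mx ?posdef_unitmx.
have trE : \tr (invmx S *m (c *: (u *m u^T))) = c * (u^T *m z) 0 0.
  by rewrite -scalemxAr mxtraceZ mulmxA mxtrace_mulC /mxtrace big_ord1.
have Szz : bform S z z = (u^T *m z) 0 0 by rewrite /bform -mulmxA Sz dotmxC.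
have := posSc z; have := posS z.
rewrite -!/(bform _ _ _) bformB bformZ bform_outer Szz [(z^T *m u) 0 0]dotmxC trE.
by set m := (u^T *m z) 0 0; nra.
Qed.

Section SchurStep.
Variables (A : 'M[R]_n) (i : 'I_n).
Hypothesis psdA : psd A.
Let a : R := A i i.
Let e : 'cV[R]_n := delta_mx i 0.
Let u := A *m e.
Let A' := A - a^-1 *: (u *m u^T).
Hypothesis a_gt0 : 0 < a.

Lemma trmx_Amul_delta : u^T = e^T *m A.
Proof. by case: psdA => symA _; rewrite /u trmx_mul symA. Qed.

Lemma psd_schur_step : psd A'.
Proof.
case: psdA => symA posA; split.
  by rewrite /A' linearB /= symA linearZ /= trmx_mul trmxK.
(* The form of A' at x is the form of A at x - (x^T A e / a) e. *)
move=> x; rewrite -/(bform _ x x); set t := bform A x e; set y := x - (t / a) *: e.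
suff -> : bform A' x x = bform A y y by apply: posA.
rewrite /y bformDl !bformDr !bformNl !bformNr !bformZl !bformZr /A' bformB bformZ.
rewrite bform_outer /e bform_delta -/a -/e.
have -> : bform A e x = t by rewrite bformC.
have -> : (x^T *m u) 0 0 = t by rewrite /u /t /bform mulmxA.
have -> : (u^T *m x) 0 0 = t by rewrite dotmxC /u /t /bform mulmxA.
by rewrite -/t; field; rewrite gt_eqF.
Qed.

Lemma rank_schur_step : (\rank A' < \rank A)%N.
Proof.
apply: rank_ltmx; rewrite ltmxE; apply/andP; split.
  have -> : A' = (1%:M - a^-1 *: (u *m e^T)) *m A.
    by rewrite /A' mulmxBl mul1mx trmx_Amul_delta scalemxAl !mulmxA -scalemxAl.
  exact: submxMl.
have uTe : (u^T *m e) 0 0 = a by rewrite trmx_Amul_delta; exact: bform_delta.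
have A'e : A' *m e = 0.
  rewrite /A' mulmxBl -scalemxAl -mulmxA [u^T *m e]mx11_scalar uTe.
  by rewrite mul_mx_scalar scalerA mulVf ?gt_eqF // scale1r subrr.
(* The row space of A' misses A, since A' e = 0 while (A e)_i = a != 0. *)
apply/negP => /submxP [D defA].
have : (A *m e) i 0 = 0 by rewrite defA -mulmxA A'e mulmx0 mxE.
by rewrite /e -colE mxE; apply/eqP; rewrite gt_eqF.
Qed.

End SchurStep.

Lemma psd_peel_rank_one A : psd A -> A != 0 ->
  exists (c : R) u, [/\ 0 <= c, psd (A - c *: (u *m u^T))
                & (\rank (A - c *: (u *m u^T))%R < \rank A)%N].
Proof.
move=> psdA A_neq0.
have [i Aii_neq0] : exists i, A i i != 0.
  apply/existsP; apply: contraT => /existsPn diag0; case/negP: A_neq0.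
  by apply/eqP/psd_diag_eq0 => // i; apply/eqP; rewrite -[_ == _]negbK diag0.
have Aii_gt0 : 0 < A i i.
  by case: psdA => _ posA; rewrite lt0r Aii_neq0 -bform_delta posA.
exists (A i i)^-1, (A *m delta_mx i 0); split.
- by rewrite invr_ge0 ltW.
- exact: psd_schur_step.
- exact: rank_schur_step.
Qed.

Lemma trace_invmx_mul_le_rank S A : posdef S -> psd A -> psd (S - A) ->
  \tr (invmx S *m A) <= (\rank A)%:R.
Proof.
move=> pdS; move: {2}(\rank A) (leqnn (\rank A)) => k.
elim: k A => [|k IH] A rankA psdA psdSA.
  by move: rankA; rewrite leqn0 mxrank_eq0 => /eqP ->; rewrite mulmx0 mxtrace0.
have [->|A_neq0] := eqVneq A 0; first by rewrite mulmx0 mxtrace0.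
have [c [u [c_ge0 psdA' rankA']]] := psd_peel_rank_one psdA A_neq0.
set A' := A - c *: (u *m u^T) in psdA' rankA'.
have psdSA' : psd (S - A').
  by rewrite /A' opprB addrA addrAC; apply/psdD/psd_outer.
have psdSc : psd (S - c *: (u *m u^T)).
  by rewrite -[S in S - _](subrK A) -addrA; apply: psdD.
have -> : invmx S *m A = invmx S *m A' + invmx S *m (c *: (u *m u^T)).
  by rewrite -mulmxDr subrK.
rewrite mxtraceD.
apply: le_trans (lerD (IH _ _ psdA' psdSA') (trace_invmx_outer_le1 pdS c_ge0 psdSc)) _.
  by rewrite -ltnS (leq_trans rankA').
by rewrite natr1 ler_nat.
Qed.

End PositiveSemidefinite.

Theorem proposition9 (R : realType) (n : nat) (Sigma : 'M[R]_n) :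
  posdef Sigma ->
  forall St Sh : 'M[R]_n,
    Sigma = St + Sh -> psd St -> psd Sh -> is_diag_mx St ->
    exists D : 'M[R]_n,
      [/\ is_diag_mx D, psd_le D Sigma, psd D &
          \tr (invmx Sigma *m (Sigma - D)) <= (\rank Sh)%:R].
Proof.
move=> pdSigma St Sh defSigma psdSt psdSh diagSt.
have SigmaSt : Sigma - St = Sh by rewrite defSigma addrC addKr.
exists St; split; rewrite /psd_le ?SigmaSt //.
apply: trace_invmx_mul_le_rank => //.
by rewrite defSigma addrK.
Qed.
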